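(* Let $\alpha,\beta\in(0,\pi)$ with $\alpha+\beta\ge\pi$. Then \[ P(S_{\alpha,\beta})=\frac{1}{\sin\frac{\min\{\alpha,\beta,\alpha+\beta-\pi\}}{2}}, \] with the convention $1/\sin 0=+\infty$.
   Context: For $\alpha\in(0,2\pi)$, $S_\alpha=\{re^{it}: r>0,\ t\in(0,\alpha)\}$. For $\alpha,\beta\in(0,\pi)$ with $\alpha+\beta\ge\pi$ the double angular domain is \[ S_{\alpha,\beta}=S_\alpha\cap\{1+re^{it}: r>0,\ t\in(\pi-\beta,\pi)\}, \] whose boundary in $\overline{\mathbb{C}}$ is the Jordan curve formed by the segment $[0,1]$, two rays and the point $\infty$. For four distinct points $a,b,c,d\in\overline{\mathbb{C}}$ set $p(a,b,c,d)=\frac{|a-b||c-d|+|a-d||b-c|}{|a-c||b-d|}$, with the expression understood as a limit (factors containing $\infty$ cancelled) if one point is $\infty$. For a domain $D\subset\overline{\mathbb{C}}$ with Jordan boundary, $P(D)=\sup p(a,b,c,d)$ over all distinct $a,b,c,d\in\partial D$ occurring in this order along the positively oriented boundary. *)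

From Stdlib Require Import Reals Lra.
Open Scope R_scope.

(* Points of the extended plane: [Some (x,y)] is x+iy, [None] is infinity. *)
Definition ept := option (R * R).

Definition dist (z w : R * R) : R :=
  sqrt ((fst z - fst w)^2 + (snd z - snd w)^2).

(* p(a,b,c,d) = (|a-b||c-d| + |a-d||b-c|) / (|a-c||b-d|), with the
   factors containing infinity cancelled when exactly one point is infinite.
   (Two or more infinite points cannot occur among distinct points.) *)
Definition pcr (a b c d : ept) : R :=
  match a, b, c, d with
  | Some a, Some b, Some c, Some d =>
      (dist a b * dist c d + dist a d * dist b c) / (dist a c * dist b d)
  | None, Some b, Some c, Some d => (dist c d + dist b c) / dist b d
  | Some a, None, Some c, Some d => (dist c d + dist a d) / dist a c
  | Some a, Some b, None, Some d => (dist a b + dist a d) / dist b d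
  | Some a, Some b, Some c, None => (dist a b + dist b c) / dist a c
  | _, _, _, _ => 0
  end.

(* Positively oriented parametrization of the boundary of S_{alpha,beta}
   (the domain lies to the left):
   t <= 0 : the ray  |t| e^{i alpha}, traversed from infinity to 0;
   0<=t<=1: the segment [0,1];
   t >= 1 : the ray  1 + (t-1) e^{i(pi-beta)}, traversed from 1 to infinity.
   The parameter [None] is the point at infinity (t = -oo = +oo). *)
Definition bpar (alpha beta : R) (t : R) : R * R :=
  if Rle_dec t 0 then (- t * cos alpha, - t * sin alpha)
  else if Rle_dec t 1 then (t, 0)
  else (1 + (t - 1) * cos (PI - beta), (t - 1) * sin (PI - beta)).

Definition bpt (alpha beta : R) (s : option R) : ept :=
  match s with
  | Some t => Some (bpar alpha beta t)
  | None => None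
  end.

Definition plt (s u : option R) : Prop :=
  match s, u with
  | Some x, Some y => x < y
  | Some _, None => True
  | None, _ => False
  end.

Definition incr4 (s1 s2 s3 s4 : option R) : Prop :=
  plt s1 s2 /\ plt s2 s3 /\ plt s3 s4.

(* four (necessarily distinct) parameters occurring in this cyclic order
   along the positively oriented boundary circle *)
Definition cyc4 (s1 s2 s3 s4 : option R) : Prop :=
  incr4 s1 s2 s3 s4 \/ incr4 s2 s3 s4 s1 \/ incr4 s3 s4 s1 s2 \/
  incr4 s4 s1 s2 s3.

(* The set of values p(a,b,c,d), a,b,c,d distinct boundary points of
   S_{alpha,beta} in positive cyclic order; P(S_{alpha,beta}) is its sup. *)
Definition Pset (alpha beta : R) (v : R) : Prop :=
  exists s1 s2 s3 s4 : option R,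
    cyc4 s1 s2 s3 s4 /\
    v = pcr (bpt alpha beta s1) (bpt alpha beta s2)
            (bpt alpha beta s3) (bpt alpha beta s4).

From Pilot Require Import Defs.
From Stdlib Require Import Reals Lra Psatz.
From Coquelicot Require Import Complex.
Open Scope R_scope.
Local Notation dist := Defs.dist.

(* The boundary of S_{alpha,beta} turns convexly: it is traversed in the directions
   alpha - PI, 0 and PI - beta along its three sides, a total turn of
   PI - (alpha + beta - PI) <= PI - m, and every chord points in a direction between the
   directions of the boundary at its two ends.  For boundary points a, b, c, d in this order
   put x = |a-b||c-d| and y = |a-d||b-c|.  Ptolemy's identity
   (c-a)(d-b) = (b-a)(d-c) + (d-a)(c-b) gives |a-c|^2 |b-d|^2 = x^2 + y^2 + 2xy cos S, where S
   is a signed sum of four chord directions with |S| <= PI - m; this forces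
   (x + y) / (|a-c||b-d|) <= 1 / sin (m/2).  When d is infinite the triangle a, b, c is
   treated the same way.  Conversely, (e^{i alpha}, 0, 1, oo) and (0, 1, 1 + e^{i(PI-beta)}, oo)
   attain 1/sin(alpha/2) and 1/sin(beta/2), while (R e^{i alpha}, 0, 1 + R e^{i(PI-beta)}, oo)
   tends to 1/sin((alpha+beta-PI)/2) as R grows. *)

Lemma cos_sub_PI x : cos (x - PI) = - cos x.
Proof. rewrite cos_minus, cos_PI, sin_PI; ring. Qed.

Lemma sin_sub_PI x : sin (x - PI) = - sin x.
Proof. rewrite sin_minus, cos_PI, sin_PI; ring. Qed.

Lemma neg_cos_le_cos m S : 0 < m < PI -> Rabs S <= PI - m -> - cos m <= cos S.
Proof.
  intros hm hS. rewrite <- Rtrigo_facts.cos_pi_minus, <- (cos_neg S).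
  destruct (Rle_lt_dec 0 S).
  - rewrite cos_neg, Rabs_right in * by lra. apply cos_decr_1; lra.
  - rewrite Rabs_left in hS by lra. apply cos_decr_1; lra.
Qed.

Lemma sum_div_le_inv_sin_half x y D m S :
  0 <= x -> 0 <= y -> 0 <= D -> 0 < m < PI -> Rabs S <= PI - m ->
  D ^ 2 = x ^ 2 + y ^ 2 + 2 * x * y * cos S -> (x + y) / D <= 1 / sin (m / 2).
Proof.
  intros hx hy hD hm hS hDxy.
  assert (hs : 0 < sin (m / 2)) by (apply sin_gt_0; lra).
  assert (hs1 : sin (m / 2) <= 1) by apply SIN_bound.
  assert (hcos : - cos m <= cos S) by (apply neg_cos_le_cos; assumption).
  replace (cos m) with (1 - 2 * sin (m / 2) * sin (m / 2)) in hcos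
    by (rewrite <- cos_2a_sin; f_equal; field).
  set (s := sin (m / 2)) in *. clearbody s.
  (* D^2 >= (x-y)^2 + 4xy s^2 >= (x+y)^2 s^2 *)
  assert (hsD : (x + y) * s <= D).
  { assert (0 <= (x - y) ^ 2 * (1 - s * s)) by (apply Rmult_le_pos; [apply pow2_ge_0 | nra]).
    assert (0 <= x * y * (cos S + (1 - 2 * s * s))) by (apply Rmult_le_pos; nra).
    assert (((x + y) * s) ^ 2 <= D ^ 2) by nra.
    nra. }
  destruct (Req_dec D 0) as [-> | hD0].
  - replace (x + y) with 0 by nra. unfold Rdiv. rewrite Rmult_0_l.
    apply Rmult_le_pos; [lra | left; apply Rinv_0_lt_compat; lra].
  - apply (Rmult_le_reg_r (D * s)); [nra |].
    field_simplify; [nra | lra | lra].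
Qed.

Definition polar (r d : R) : C := (r * cos d, r * sin d).

Lemma polar_mult r s x y : (polar r x * polar s y)%C = polar (r * s) (x + y).
Proof. unfold polar, Cmult; simpl. rewrite cos_plus, sin_plus. f_equal; ring. Qed.

Lemma polar_1_0 : polar 1 0 = RtoC 1.
Proof. unfold polar, RtoC. rewrite cos_0, sin_0. f_equal; ring. Qed.

Lemma polar_zero d : polar 0 d = RtoC 0.
Proof. unfold polar, RtoC. f_equal; ring. Qed.

Lemma polar_PI_sub r d : polar r (PI - d) = (- polar r (- d))%C.
Proof.
  unfold polar, Copp; simpl.
  rewrite Rtrigo_facts.cos_pi_minus, sin_PI_x, cos_neg, sin_neg. f_equal; ring.
Qed.

Lemma Cmod_polar r d : 0 <= r -> Cmod (polar r d) = r.
Proof.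
  intros hr. unfold Cmod, polar; simpl.
  transitivity (sqrt (r ^ 2)); [| apply sqrt_pow2; exact hr].
  f_equal. transitivity (r ^ 2 * (sin d ^ 2 + cos d ^ 2)); [ring |].
  rewrite <- !Rsqr_pow2, sin2_cos2. ring.
Qed.

Lemma Cmod_polar_add_sqr r s x y :
  Cmod (polar r x + polar s y) ^ 2 = r ^ 2 + s ^ 2 + 2 * r * s * cos (x - y).
Proof.
  rewrite Cmod2_alt. unfold polar, Re, Im; simpl.
  rewrite cos_minus. pose proof (sin2_cos2 x). pose proof (sin2_cos2 y). unfold Rsqr in *.
  transitivity (r ^ 2 * (sin x * sin x + cos x * cos x) + s ^ 2 * (sin y * sin y + cos y * cos y)
    + 2 * r * s * (cos x * cos y + sin x * sin y)); [ring |].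
  rewrite H, H0. ring.
Qed.

Lemma Cmod_polar_sub r x y : 0 <= r -> 0 <= x - y <= 2 * PI ->
  Cmod (polar r x - polar r y) = 2 * r * sin ((x - y) / 2).
Proof.
  intros hr hxy.
  assert (hs : 0 <= sin ((x - y) / 2)) by (apply sin_ge_0; lra).
  apply Rsqr_inj; [apply Cmod_ge_0 | nra |].
  replace (polar r x - polar r y)%C with (polar r x + polar (- r) y)%C
    by (unfold polar, Cminus, Cplus, Copp; simpl; f_equal; ring).
  rewrite !Rsqr_pow2, Cmod_polar_add_sqr.
  replace (x - y) with (2 * ((x - y) / 2)) at 1 by field.
  rewrite cos_2a_sin. ring.
Qed.

Lemma polar_upper_half (z : C) : 0 <= snd z -> exists d, 0 <= d <= PI /\ z = polar (Cmod z) d.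
Proof.
  intros hy. set (r := Cmod z).
  assert (hr : 0 <= r) by apply Cmod_ge_0.
  destruct (Req_dec r 0) as [hr0 | hr0].
  { exists 0. split; [pose proof PI_RGT_0; lra |].
    rewrite hr0, (Cmod_eq_0 z hr0). unfold polar, RtoC. f_equal; ring. }
  assert (hxy : fst z ^ 2 + snd z ^ 2 = r ^ 2) by (unfold r; rewrite Cmod2_alt; reflexivity).
  assert (hx : Rabs (fst z) <= r) by apply re_le_Cmod.
  pose proof (Rle_abs (fst z)). pose proof (Rle_abs (- fst z)). rewrite Rabs_Ropp in *.
  set (k := fst z / r).
  assert (hkr : k * r = fst z) by (unfold k; field; lra).
  assert (hk : -1 <= k <= 1) by (split; nra).
  exists (acos k). split; [apply acos_bound |].
  destruct z as [x y]; simpl in *. unfold polar. f_equal.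
  - rewrite cos_acos by exact hk. lra.
  - rewrite sin_acos by exact hk.
    replace (1 - k²) with ((y / r) * (y / r)) by (unfold Rsqr; field_simplify_eq; nra).
    rewrite sqrt_square; [field; lra |].
    unfold Rdiv. apply Rmult_le_pos; [lra | left; apply Rinv_0_lt_compat; lra].
Qed.

Lemma polar_in_sector (z : C) p1 p2 : 0 < p2 - p1 < PI ->
  0 <= cos p1 * snd z - sin p1 * fst z -> 0 <= fst z * sin p2 - snd z * cos p2 ->
  exists d, p1 <= d <= p2 /\ z = polar (Cmod z) d.
Proof.
  intros hp h1 h2.
  set (w := (polar 1 (- p1) * z)%C).
  assert (hw : Cmod w = Cmod z) by (unfold w; rewrite Cmod_mult, Cmod_polar; lra).
  destruct (polar_upper_half w) as [d [hd hwd]].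
  { unfold w, polar, Cmult; simpl. rewrite cos_neg, sin_neg. lra. }
  assert (hz : z = polar (Cmod z) (p1 + d)).
  { transitivity (polar 1 p1 * w)%C.
    - unfold w. rewrite Cmult_assoc, polar_mult.
      replace (p1 + - p1) with 0 by ring. rewrite Rmult_1_l, polar_1_0. ring.
    - rewrite hwd, hw, polar_mult, Rmult_1_l. reflexivity. }
  destruct (Req_dec (Cmod z) 0) as [h0 | h0].
  - exists p1. split; [lra |]. rewrite h0, hz, h0. unfold polar. f_equal; ring.
  - exists (p1 + d). split; [split; [lra |] | exact hz].
    destruct (Rle_lt_dec (p1 + d) p2) as [ok | bad]; [exact ok | exfalso].
    assert (hsin : sin (p2 - (p1 + d)) < 0) by (apply sin_lt_0_var; lra).
    rewrite sin_minus in hsin. rewrite hz in h2. unfold polar in h2; simpl in h2.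
    assert (0 < Cmod z) by (pose proof (Cmod_ge_0 z); lra).
    nra.
Qed.

Lemma polar_on_ray (z : C) l d : 0 <= l -> z = polar l d -> z = polar (Cmod z) d.
Proof. intros hl ->. rewrite Cmod_polar; auto. Qed.

Definition chord_angle (p q : R * R) (d : R) : Prop := (q - p)%C = polar (dist p q) d.

Lemma dist_Cmod p q : dist p q = Cmod (p - q).
Proof. reflexivity. Qed.

Lemma dist_comm p q : dist p q = dist q p.
Proof. rewrite !dist_Cmod, <- Cmod_opp. f_equal. ring. Qed.

Lemma chord_triangle_sqr a b c d1 d2 : chord_angle a b d1 -> chord_angle b c d2 ->
  dist a c ^ 2 = dist a b ^ 2 + dist b c ^ 2 + 2 * dist a b * dist b c * cos (d1 - d2).
Proof.
  intros h1 h2. rewrite dist_comm, dist_Cmod.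
  replace (c - a)%C with ((b - a) + (c - b))%C by ring.
  rewrite h1, h2. apply Cmod_polar_add_sqr.
Qed.

Lemma chord_quad_sqr a b c d d1 d2 d3 e :
  chord_angle a b d1 -> chord_angle b c d2 -> chord_angle c d d3 -> chord_angle a d e ->
  (dist a c * dist b d) ^ 2 = (dist a b * dist c d) ^ 2 + (dist a d * dist b c) ^ 2
    + 2 * (dist a b * dist c d) * (dist a d * dist b c) * cos (d1 + d3 - (e + d2)).
Proof.
  intros h1 h2 h3 h4.
  rewrite (dist_comm a c), (dist_comm b d), (dist_Cmod c a), (dist_Cmod d b), <- Cmod_mult.
  replace ((c - a) * (d - b))%C with ((b - a) * (d - c) + (d - a) * (c - b))%C by ring.
  rewrite h1, h2, h3, h4, !polar_mult. apply Cmod_polar_add_sqr.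
Qed.

Lemma dist_nonneg p q : 0 <= dist p q.
Proof. apply sqrt_pos. Qed.

Lemma triangle_ratio_le a b c m d1 d2 : 0 < m < PI ->
  chord_angle a b d1 -> chord_angle b c d2 -> Rabs (d1 - d2) <= PI - m ->
  (dist a b + dist b c) / dist a c <= 1 / sin (m / 2).
Proof.
  intros hm h1 h2 hS.
  apply (sum_div_le_inv_sin_half _ _ _ m (d1 - d2)); try apply dist_nonneg; try assumption.
  apply (chord_triangle_sqr a b c); assumption.
Qed.

Lemma ptolemy_ratio_le a b c d m d1 d2 d3 e : 0 < m < PI ->
  chord_angle a b d1 -> chord_angle b c d2 -> chord_angle c d d3 -> chord_angle a d e ->
  Rabs (d1 + d3 - (e + d2)) <= PI - m ->
  (dist a b * dist c d + dist a d * dist b c) / (dist a c * dist b d) <= 1 / sin (m / 2).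
Proof.
  intros hm h1 h2 h3 h4 hS.
  apply (sum_div_le_inv_sin_half _ _ _ m (d1 + d3 - (e + d2)));
    try (apply Rmult_le_pos; apply dist_nonneg); try assumption.
  apply (chord_quad_sqr a b c d); assumption.
Qed.

Lemma pcr_rot x y z w : pcr x y z w = pcr y z w x.
Proof.
  destruct x as [x|], y as [y|], z as [z|], w as [w|]; simpl; try reflexivity;
    rewrite ?(dist_comm y x), ?(dist_comm z x), ?(dist_comm w x),
            ?(dist_comm z y), ?(dist_comm w y), ?(dist_comm w z);
    f_equal; ring.
Qed.

Section Boundary.

Variables alpha beta : R.
Hypothesis halpha : 0 < alpha < PI.
Hypothesis hbeta : 0 < beta < PI.

(* the argument, normalized to (-PI, PI], of the direction in which the boundary is
   traversed at [bpar alpha beta t] *)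
Definition side_angle (t : R) : R :=
  if Rle_dec t 0 then alpha - PI else if Rle_dec t 1 then 0 else PI - beta.

Lemma side_angle_spread m t u : m <= alpha -> m <= beta -> m <= alpha + beta - PI ->
  side_angle u - side_angle t <= PI - m.
Proof.
  intros. unfold side_angle.
  destruct (Rle_dec t 0), (Rle_dec t 1), (Rle_dec u 0), (Rle_dec u 1); lra.
Qed.

Lemma boundary_chord_angle t u : PI < alpha + beta -> t < u ->
  exists d, side_angle t <= d <= side_angle u /\
            chord_angle (bpar alpha beta t) (bpar alpha beta u) d.
Proof.
  intros hab htu.
  assert (hsa : 0 < sin alpha) by (apply sin_gt_0; lra).
  assert (hsb : 0 < sin beta) by (apply sin_gt_0; lra).
  assert (hsab : sin alpha * cos beta + cos alpha * sin beta < 0)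
    by (rewrite <- sin_plus; apply sin_lt_0; lra).
  unfold chord_angle. rewrite dist_comm, dist_Cmod.
  unfold side_angle, bpar.
  destruct (Rle_dec t 0), (Rle_dec t 1), (Rle_dec u 0), (Rle_dec u 1); try lra.
  all: first
    [ match goal with |- exists d, ?p <= d <= ?p /\ _ =>
        exists p; split; [lra | apply polar_on_ray with (u - t); [lra |]] end;
      unfold polar, Cminus, Cplus, Copp; simpl;
      rewrite ?cos_sub_PI, ?sin_sub_PI, ?cos_0, ?sin_0, ?Rtrigo_facts.cos_pi_minus, ?sin_PI_x;
      f_equal; ring
    | apply polar_in_sector; simpl;
      rewrite ?cos_sub_PI, ?sin_sub_PI, ?cos_0, ?sin_0, ?Rtrigo_facts.cos_pi_minus, ?sin_PI_x;
      [lra | nra | nra] ].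
Qed.

Section UpperBound.

Variable m : R.
Hypothesis hm : 0 < m.
Hypothesis hma : m <= alpha.
Hypothesis hmb : m <= beta.
Hypothesis hmg : m <= alpha + beta - PI.

Lemma pcr_finite_le t1 t2 t3 t4 : t1 < t2 -> t2 < t3 -> t3 < t4 ->
  pcr (Some (bpar alpha beta t1)) (Some (bpar alpha beta t2))
      (Some (bpar alpha beta t3)) (Some (bpar alpha beta t4)) <= 1 / sin (m / 2).
Proof.
  intros h12 h23 h34.
  assert (hab : PI < alpha + beta) by lra.
  destruct (boundary_chord_angle t1 t2 hab h12) as [d1 [hd1 c1]].
  destruct (boundary_chord_angle t2 t3 hab h23) as [d2 [hd2 c2]].
  destruct (boundary_chord_angle t3 t4 hab h34) as [d3 [hd3 c3]].
  destruct (boundary_chord_angle t1 t4 hab ltac:(lra)) as [e [he c4]].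
  pose proof (side_angle_spread m t1 t4 hma hmb hmg).
  apply (ptolemy_ratio_le _ _ _ _ m d1 d2 d3 e); try assumption; [lra |].
  apply Rabs_le. lra.
Qed.

Lemma pcr_infinite_le t1 t2 t3 : t1 < t2 -> t2 < t3 ->
  pcr (Some (bpar alpha beta t1)) (Some (bpar alpha beta t2))
      (Some (bpar alpha beta t3)) None <= 1 / sin (m / 2).
Proof.
  intros h12 h23.
  assert (hab : PI < alpha + beta) by lra.
  destruct (boundary_chord_angle t1 t2 hab h12) as [d1 [hd1 c1]].
  destruct (boundary_chord_angle t2 t3 hab h23) as [d2 [hd2 c2]].
  pose proof (side_angle_spread m t1 t3 hma hmb hmg).
  apply (triangle_ratio_le _ _ _ m d1 d2); try assumption; [lra |].
  apply Rabs_le. lra.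
Qed.

Lemma pcr_incr4_le s1 s2 s3 s4 : incr4 s1 s2 s3 s4 ->
  pcr (bpt alpha beta s1) (bpt alpha beta s2) (bpt alpha beta s3) (bpt alpha beta s4)
    <= 1 / sin (m / 2).
Proof.
  intros [h12 [h23 h34]].
  destruct s1 as [t1|], s2 as [t2|], s3 as [t3|], s4 as [t4|]; simpl in *; try contradiction.
  - apply pcr_finite_le; assumption.
  - apply pcr_infinite_le; assumption.
Qed.

Lemma Pset_le v : Pset alpha beta v -> v <= 1 / sin (m / 2).
Proof.
  intros [s1 [s2 [s3 [s4 [[h | [h | [h | h]]] ->]]]]].
  - apply pcr_incr4_le; assumption.
  - rewrite pcr_rot. apply pcr_incr4_le; assumption.
  - rewrite 2!pcr_rot. apply pcr_incr4_le; assumption.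
  - rewrite 3!pcr_rot. apply pcr_incr4_le; assumption.
Qed.

End UpperBound.

End Boundary.

Section LowerBound.

Variables alpha beta : R.
Hypothesis halpha : 0 < alpha < PI.
Hypothesis hbeta : 0 < beta < PI.
Hypothesis hab : PI <= alpha + beta.

Lemma bpar_first_side t : t <= 0 -> bpar alpha beta t = polar (- t) alpha.
Proof. intros ht. unfold bpar. destruct (Rle_dec t 0); [reflexivity | lra]. Qed.

Lemma bpar_second_side t : 0 < t <= 1 -> bpar alpha beta t = polar t 0.
Proof.
  intros ht. unfold bpar, polar. rewrite cos_0, sin_0.
  destruct (Rle_dec t 0); [lra |]. destruct (Rle_dec t 1); [f_equal; ring | lra].
Qed.

Lemma bpar_third_side t : 1 < t -> bpar alpha beta t = (polar 1 0 + polar (t - 1) (PI - beta))%C.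
Proof.
  intros ht. unfold bpar, polar, Cplus. rewrite cos_0, sin_0. simpl.
  destruct (Rle_dec t 0); [lra |]. destruct (Rle_dec t 1); [lra | f_equal; ring].
Qed.

Lemma Pset_alpha : Pset alpha beta (1 / sin (alpha / 2)).
Proof.
  exists (Some (-1)), (Some 0), (Some 1), None. split.
  { left. repeat split; simpl; lra. }
  simpl. rewrite (bpar_first_side (-1)), (bpar_first_side 0), (bpar_second_side 1) by lra.
  replace (- -1) with 1 by ring. rewrite Ropp_0, polar_zero, !dist_Cmod.
  replace (polar 1 alpha - 0)%C with (polar 1 alpha) by ring.
  replace (0 - polar 1 0)%C with (- polar 1 0)%C by ring.
  rewrite Cmod_opp, !Cmod_polar, Cmod_polar_sub by lra.
  replace (alpha - 0) with alpha by ring.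
  assert (0 < sin (alpha / 2)) by (apply sin_gt_0; lra).
  field. lra.
Qed.

Lemma Pset_beta : Pset alpha beta (1 / sin (beta / 2)).
Proof.
  exists (Some 0), (Some 1), (Some 2), None. split.
  { left. repeat split; simpl; lra. }
  simpl. rewrite (bpar_first_side 0), (bpar_second_side 1), (bpar_third_side 2) by lra.
  replace (2 - 1) with 1 by ring. rewrite Ropp_0, polar_zero, !dist_Cmod.
  replace (0 - polar 1 0)%C with (- polar 1 0)%C by ring.
  replace (polar 1 0 - (polar 1 0 + polar 1 (PI - beta)))%C with (- polar 1 (PI - beta))%C by ring.
  replace (0 - (polar 1 0 + polar 1 (PI - beta)))%C with (- (polar 1 0 - polar 1 (- beta)))%C
    by (rewrite polar_PI_sub; ring).
  rewrite !Cmod_opp, !Cmod_polar, Cmod_polar_sub by lra.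
  replace (0 - - beta) with beta by ring.
  assert (0 < sin (beta / 2)) by (apply sin_gt_0; lra).
  field. lra.
Qed.

Lemma Pset_gamma_approx r : 1 <= r ->
  exists v, Pset alpha beta v /\ 2 * r - 1 <= v * (1 + 2 * r * sin ((alpha + beta - PI) / 2)).
Proof.
  intros hr.
  set (A := polar r alpha). set (E := (polar 1 0 + polar r (PI - beta))%C).
  exists ((r + Cmod E) / Cmod (A - E)). split.
  { exists (Some (- r)), (Some 0), (Some (1 + r)), None. split.
    { left. repeat split; simpl; lra. }
    simpl. rewrite (bpar_first_side (- r)), (bpar_first_side 0), (bpar_third_side (1 + r)) by lra.
    replace (1 + r - 1) with r by ring. rewrite Ropp_0, Ropp_involutive, polar_zero, !dist_Cmod.
    fold A E.
    replace (A - 0)%C with A by ring. replace (0 - E)%C with (- E)%C by ring.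
    rewrite Cmod_opp. unfold A. rewrite Cmod_polar by lra. reflexivity. }
  assert (hE : r - 1 <= Cmod E).
  { pose proof (Cmod_triangle E (- polar 1 0)) as htri.
    replace (E + - polar 1 0)%C with (polar r (PI - beta)) in htri by (unfold E; ring).
    rewrite Cmod_opp, !Cmod_polar in htri by lra. lra. }
  assert (hAC : Cmod (A - E) <= 1 + 2 * r * sin ((alpha + beta - PI) / 2)).
  { pose proof (Cmod_triangle (polar r alpha - polar r (PI - beta)) (- polar 1 0)) as htri.
    replace (polar r alpha - polar r (PI - beta) + - polar 1 0)%C with (A - E)%C
      in htri by (unfold A, E; ring).
    rewrite Cmod_opp, Cmod_polar, Cmod_polar_sub in htri by lra.
    replace (alpha - (PI - beta)) with (alpha + beta - PI) in htri by ring. lra. }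
  assert (hAC0 : 0 < Cmod (A - E)).
  { apply Cmod_gt_0. intros h.
    assert (hx : fst (A - E)%C = 0) by (rewrite h; reflexivity).
    assert (hy : snd (A - E)%C = 0) by (rewrite h; reflexivity).
    unfold A, E, polar in hx, hy; simpl in hx, hy.
    rewrite cos_0, sin_0, Rtrigo_facts.cos_pi_minus, sin_PI_x in *.
    (* the cross product with e^{i alpha} vanishes at A but not at E *)
    assert (hsa : 0 < sin alpha) by (apply sin_gt_0; lra).
    assert (hsab : sin (alpha + beta) <= 0) by (apply sin_le_0; lra).
    rewrite sin_plus in hsab.
    assert (cos alpha * (r * sin alpha + - (1 * 0 + r * sin beta))
            - sin alpha * (r * cos alpha + - (1 * 1 + r * - cos beta)) = 0)
      by (rewrite hx, hy; ring).
    assert (0 <= r * - (sin alpha * cos beta + cos alpha * sin beta)) by (apply Rmult_le_pos; lra).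
    lra. }
  assert (hvD : (r + Cmod E) / Cmod (A - E) * Cmod (A - E) = r + Cmod E) by (field; lra).
  assert (0 <= (r + Cmod E) / Cmod (A - E))
    by (apply Rmult_le_pos; [pose proof (Cmod_ge_0 E); lra | left; apply Rinv_0_lt_compat; lra]).
  nra.
Qed.

Lemma upper_bound_ge_inv_sin B : is_upper_bound (Pset alpha beta) B ->
  1 <= B * sin ((alpha + beta - PI) / 2).
Proof.
  intros hB.
  assert (hs : 0 <= sin ((alpha + beta - PI) / 2)) by (apply sin_ge_0; lra).
  set (s := sin ((alpha + beta - PI) / 2)) in *.
  destruct (Rlt_le_dec (B * s) 1) as [hBs | ok]; [exfalso | exact ok].
  set (r := 1 + (2 + Rabs B) / (1 - B * s)).
  assert (hq : (2 + Rabs B) / (1 - B * s) * (1 - B * s) = 2 + Rabs B) by (field; lra).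
  assert (hq0 : 0 < (2 + Rabs B) / (1 - B * s))
    by (apply Rdiv_lt_0_compat; pose proof (Rabs_pos B); lra).
  assert (hr : 1 <= r) by (unfold r; lra).
  destruct (Pset_gamma_approx r hr) as [v [hv hle]]. fold s in hle.
  (* r was chosen so that B * (1 + 2 r s) < 2 r - 1 *)
  assert (hrB : B * (1 + 2 * r * s) < 2 * r - 1).
  { assert (r * (1 - B * s) = (1 - B * s) + (2 + Rabs B))
      by (unfold r; rewrite Rmult_plus_distr_r, hq; ring).
    pose proof (Rle_abs B). nra. }
  assert (0 <= r * s) by (apply Rmult_le_pos; lra).
  pose proof (hB v hv). nra.
Qed.

End LowerBound.

Theorem theorem1p4 (alpha beta : R)
  (ha : 0 < alpha < PI) (hb : 0 < beta < PI) (hab : PI <= alpha + beta) :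
  let m := Rmin alpha (Rmin beta (alpha + beta - PI)) in
  (0 < m -> is_lub (Pset alpha beta) (1 / sin (m / 2))) /\
  (m = 0 -> ~ bound (Pset alpha beta)).
Proof.
  intros m.
  assert (hma : m <= alpha) by apply Rmin_l.
  assert (hmb : m <= beta) by (eapply Rle_trans; [apply Rmin_r | apply Rmin_l]).
  assert (hmg : m <= alpha + beta - PI) by (eapply Rle_trans; [apply Rmin_r | apply Rmin_r]).
  assert (hcase : m = alpha \/ m = beta \/ m = alpha + beta - PI)
    by (unfold m, Rmin; destruct (Rle_dec beta _), (Rle_dec alpha _); auto).
  clearbody m. split.
  - intros hm. split.
    + intros v. apply (Pset_le alpha beta); assumption.
    + intros B hB. destruct hcase as [-> | [-> | ->]].
      * apply hB, Pset_alpha; assumption.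
      * apply hB, Pset_beta; assumption.
      * pose proof (upper_bound_ge_inv_sin alpha beta ha hb hab B hB).
        assert (hs : 0 < sin ((alpha + beta - PI) / 2)) by (apply sin_gt_0; lra).
        apply (Rmult_le_reg_r _ _ _ hs). unfold Rdiv. rewrite Rmult_assoc, Rinv_l; lra.
  - intros hm [B hB].
    pose proof (upper_bound_ge_inv_sin alpha beta ha hb hab B hB) as hBs.
    replace (alpha + beta - PI) with 0 in hBs by (destruct hcase as [e | [e | e]]; lra).
    replace (0 / 2) with 0 in hBs by field. rewrite sin_0 in hBs. lra.
Qed.
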